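(* Let $p$ be a prime, $q$ a power of $p$, $n\ge1$ odd, $m=\frac{q^n+1}{q+1}$, and let $G\le B(Q_\infty)$ be a subgroup, with $g_0$, $g_w$, $G_1$, $G_2$ as in the context. Let $a\in G_1$ be an element of order $s>1$. Then the number of elements $g\in G$ of the form $g=[a,b,c,d]$ (for some $b,c,d$) such that $\pi(g)$ has order $s$ is $\gcd(g_0,m)\,g_w$ if $s\nmid(q+1)$, and $\gcd(g_0,m)\,\#G_2$ if $s\mid(q+1)$.
   Context: Let $\mathcal C_n=\mathbb{F}_{q^{2n}}(x,y,z)$ be the function field defined by $x^q+x=y^{q+1}$ and $z^m=y^{q^2}-y$. Let $A(P_\infty)$ be the group of symbols $[a,b,c]$ with $a\in\mathbb{F}_{q^2}^*$, $b,c\in\mathbb{F}_{q^2}$, $c^q+c=b^{q+1}$, group law $[a',b',c']\circ[a,b,c]=[a'a,ab'+b,a^{q+1}c'+ab^qb'+c]$. Let $B(Q_\infty)$ be the group of automorphisms $[a,b,c,d]$ of $\mathcal C_n$ given by $x\mapsto a^{q+1}x+ab^qy+c$, $y\mapsto ay+b$, $z\mapsto dz$, where $a\in\mathbb{F}_{q^2}^*$, $b,c\in\mathbb{F}_{q^2}$, $c^q+c=b^{q+1}$, $d\in\mathbb{F}_{q^{2n}}$, $d^m=a$, with group law $[a',b',c',d']\circ[a,b,c,d]=[a'a,ab'+b,a^{q+1}c'+ab^qb'+c,d'd]$. Let $\pi([a,b,c,d])=[a,b,c]$, $\pi_d([a,b,c,d])=d$, $\pi_a([a,b,c,d])=a$.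 For a subgroup $G$: $g_0=\#\pi_d(G)$, $G_1=\pi_a(G)$, $g_w=\#\ker(\pi_d|_G)$, and $G_2=\{b\in\mathbb{F}_{q^2}:[1,b,c]\in\pi(G)\text{ for some }c\}$. *)

From HB Require Import structures.
From mathcomp Require Import all_boot all_order all_algebra all_field.
Set Implicit Arguments. Unset Strict Implicit. Unset Printing Implicit Defensive.
Import GRing.Theory.
Local Open Scope ring_scope.

(* The ambient field L plays the role of F_{q^{2n}}; F_{q^2} is the subfield
   {x | x^(q^2) = x}.  Elements [a,b,c,d] of B(Q_oo) are quadruples ((a,b),c),d. *)

Section Defs.
Variable L : finFieldType.

Definition quad := (L * L * L * L)%type.
Definition qa (g : quad) : L := g.1.1.1.
Definition qb (g : quad) : L := g.1.1.2.
Definition qc (g : quad) : L := g.1.2.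
Definition qd (g : quad) : L := g.2.

Definition mB (q n : nat) : nat := ((q ^ n).+1 %/ q.+1)%N.

Definition inFq2 (q : nat) (x : L) : bool := x ^+ (q ^ 2) == x.

Definition inB (q n : nat) (g : quad) : bool :=
  [&& qa g != 0, inFq2 q (qa g), inFq2 q (qb g), inFq2 q (qc g),
      qc g ^+ q + qc g == qb g ^+ q.+1 & qd g ^+ mB q n == qa g].

Definition compB (q : nat) (g' g : quad) : quad :=
  (qa g' * qa g, qa g * qb g' + qb g,
   qa g ^+ q.+1 * qc g' + qa g * qb g ^+ q * qb g' + qc g, qd g' * qd g).

Definition idB : quad := (1, 0, 0, 1).

Definition is_subgroupB (q n : nat) (G : {set quad}) : Prop :=
  [/\ {subset G <= inB q n}, idB \in G,
      {in G &, forall g h, compB q g h \in G} &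
      {in G, forall g, exists2 h, h \in G & compB q h g = idB}].

Definition triple := (L * L * L)%type.
Definition piB (g : quad) : triple := (qa g, qb g, qc g).

Definition compA (q : nat) (t' t : triple) : triple :=
  (t'.1.1 * t.1.1, t.1.1 * t'.1.2 + t.1.2,
   t.1.1 ^+ q.+1 * t'.2 + t.1.1 * t.1.2 ^+ q * t'.1.2 + t.2).

Definition idA : triple := (1, 0, 0).

Definition powA (q : nat) (t : triple) (k : nat) : triple := iter k (compA q t) idA.

Definition has_orderA (q : nat) (t : triple) (s : nat) : bool :=
  (powA q t s == idA) && [forall k : 'I_s, (0 < k)%N ==> (powA q t k != idA)].

Definition has_order_mul (a : L) (s : nat) : Prop :=
  a ^+ s = 1 /\ forall k, (0 < k < s)%N -> a ^+ k != 1.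

Definition g0 (G : {set quad}) : nat := #|[set qd g | g in G]|.
Definition gw (G : {set quad}) : nat := #|[set g in G | qd g == 1]|.
Definition G1 (G : {set quad}) : {set L} := [set qa g | g in G].
Definition G2 (G : {set quad}) : {set L} :=
  [set b : L | [exists g in G, (qa g == 1) && (qb g == b)]].

End Defs.

From Pilot Require Import Defs.
From HB Require Import structures.
From mathcomp Require Import all_boot all_order all_algebra all_field.
From mathcomp Require Import all_fingroup all_solvable.
From mathcomp Require Import ring.
Set Implicit Arguments. Unset Strict Implicit. Unset Printing Implicit Defensive.
Import GRing.Theory FinRing.Theory.
Local Open Scope ring_scope.

(* Write E for the elements of G with a-coordinate a, K for those with
   a-coordinate 1 and Z for those of the form [1,0,c,1].  Right translation
   inside G gives #E = #K, and the fibres of d on K are translates of ker d,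
   whose image {d in d(G) | d^m = 1} in the cyclic group d(G) has gcd(g0, m)
   elements; so #E = gcd(g0, m) g_w.
   If a != 1 and a^j = 1 then [a,b,c]^j = [1, 0, kappa * sum_(i<j) a^((q+1)i)]
   with kappa = c + a b^q b/(1-a).  For j = s the sum vanishes unless a^(q+1) = 1,
   i.e. s | q+1, and then it is s, a unit in characteristic p.  So if s does not
   divide q+1, every element of E counts.  Otherwise the counted elements are
   those with kappa = 0: they are determined by (a,b,d), and every (a,b,d)-fibre
   of E, a translate of Z, contains one, namely z g for the power z = g^j in Z
   whose c-coordinate is -kappa.  Counting (a,b,d)-fibres in E and in ker d gives
   #count * #Z = #E = gcd(g0, m) #G2 #Z. *)

Lemma card_uniform_fibres (T U : finType) (f : T -> U) (A : {set T}) c :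
  {in A, forall x, #|[set y in A | f y == f x]| = c} -> #|A| = (#|f @: A| * c)%N.
Proof.
move=> fibre_c.
rewrite -sum1_card (partition_big f (mem (f @: A))) => [|x xA]; last exact: imset_f.
rewrite -sum_nat_const; apply: eq_bigr => _ /imsetP[x xA ->].
by rewrite -(fibre_c x xA) -sum1_card; apply: eq_bigl => y; rewrite inE.
Qed.

Lemma dvdn_Sexp_odd q n : odd n -> (q.+1 %| (q ^ n).+1)%N.
Proof.
move=> n_odd; rewrite -[(_ %| _)%N]/(q.+1%:Z %| (q ^ n).+1%:Z)%Z.
have -> : (q ^ n).+1%:Z = q%:Z ^+ n - (-1) ^+ n.
  by rewrite -signr_odd n_odd opprK -addn1 PoszD -!natz natrX.
by rewrite subrXX opprK addrC dvdz_mulr.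
Qed.

Lemma prime_ndvdS p q : prime p -> (p %| q)%N -> ~~ (p %| q.+1)%N.
Proof. by move=> p_pr p_q; rewrite -addn1 dvdn_addr // dvdn1 neq_ltn prime_gt1 ?orbT. Qed.

Lemma natr_dvdS_neq0 (R : nzRingType) p q s : p \in [pchar R] -> (p %| q)%N ->
  (s %| q.+1)%N -> s%:R != 0 :> R.
Proof.
move=> chp p_q s_q1; rewrite -(dvdn_pcharf chp).
by apply: contra (prime_ndvdS (pcharf_prime chp) p_q) => /dvdn_trans; apply.
Qed.

Lemma prime_ndvd_mB p q n : prime p -> (p %| q)%N -> odd n -> ~~ (p %| mB q n)%N.
Proof.
move=> p_pr p_q n_odd; apply: contra (prime_ndvdS p_pr (dvdn_exp (odd_gt0 n_odd) p_q)).
by move=> p_m; rewrite -(divnK (dvdn_Sexp_odd q n_odd)) dvdn_mulr.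
Qed.

Lemma exprDn_pchar_pow (R : comNzSemiRingType) p k (x y : R) : p \in [pchar R] ->
  (x + y) ^+ (p ^ k) = x ^+ (p ^ k) + y ^+ (p ^ k).
Proof.
move=> chp; apply: exprDn_pchar.
by rewrite (eq_pnat _ (pcharf_eq chp)) pnatX pnat_id ?(pcharf_prime chp).
Qed.

Lemma natr_pred_pchar (R : nzRingType) p : p \in [pchar R] -> p.-1%:R = -1 :> R.
Proof.
move=> chp; apply/eqP; rewrite -addr_eq0 -mulrSr prednK ?(pcharf0 chp) //.
exact/prime_gt0/(pcharf_prime chp).
Qed.

Lemma natr_expr_pred_pchar (F : fieldType) p N : p \in [pchar F] ->
  (N%:R : F) != 0 -> (N%:R : F) ^+ p.-1 = 1.
Proof.
move=> chp N_neq0; apply: (mulfI N_neq0).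
rewrite mulr1 -exprS prednK ?prime_gt0 ?(pcharf_prime chp) //.
by rewrite -(pFrobenius_autE chp) pFrobenius_aut_nat.
Qed.

Lemma sum_expr_unity_root (R : idomainType) (r : R) s : r ^+ s = 1 ->
  \sum_(i < s) r ^+ i = if r == 1 then s%:R else 0.
Proof.
move=> r_s; have [->|r_neq1] := eqVneq r 1.
  by rewrite (eq_bigr (fun _ => 1)) => [|i _]; rewrite ?expr1n // sumr_const card_ord.
apply/eqP; move: (subrX1 r s); rewrite r_s subrr => /esym/eqP.
by rewrite mulf_eq0 subr_eq0 (negbTE r_neq1).
Qed.

Lemma has_order_mul_dvdn (L : finFieldType) (a : L) s : (0 < s)%N ->
  has_order_mul a s -> forall j, (a ^+ j == 1) = (s %| j)%N.
Proof.
move=> s_gt0 [a_s a_lt] j.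
rewrite {1}(divn_eq j s) exprD mulnC exprM a_s expr1n mul1r /dvdn.
have [->|r_gt0] := posnP (j %% s); first by rewrite !eqxx.
by rewrite (negbTE (a_lt _ _)) ?r_gt0 ?ltn_pmod.
Qed.

Lemma card_unity_roots_unit_group (F : finFieldType) (H : {group {unit F}}) m :
  #|[set u in H | (u ^+ m == 1)%g]| = gcdn #|H| m.
Proof.
set g := gcdn #|H| m; set S := [set u in H | _].
have g_gt0 : (0 < g)%N by rewrite gcdn_gt0 cardG_gt0.
have S_order u : (u \in S) = (u \in H) && (#[u]%g %| g)%N.
  by rewrite inE dvdn_gcd -order_dvdn; apply: andb_id2l => /order_dvdG ->.
apply/eqP; rewrite eqn_leq; apply/andP; split.
  rewrite -(card_imset S val_inj) cardE.
  apply: max_unity_roots (enum_uniq _) => //; apply/allP => z.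
  rewrite mem_enum => /imsetP[u]; rewrite S_order => /andP[_ u_g] ->{z}.
  by rewrite unity_rootE -val_unitX -val_unit1 (inj_eq val_inj) -order_dvdn.
have /cyclicP[x defH] := field_unit_group_cyclic H.
have g_dvd : (g %| #[x]%g)%N by rewrite /order -defH dvdn_gcdl.
pose y := (x ^+ (#[x]%g %/ g))%g.
have y_order : #[y]%g = g.
  by rewrite orderXdiv ?dvdn_div // divnA // mulKn ?order_gt0.
rewrite -y_order subset_leq_card //; apply/subsetP => u yu.
rewrite S_order -y_order order_dvdG // andbT defH.
by apply: subsetP yu; rewrite cycle_subG groupX // cycle_id.
Qed.

Lemma card_unity_roots_subgroup (F : finFieldType) (D : {set F}) m :
  0 \notin D -> 1 \in D -> {in D &, forall x y, x * y \in D} ->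
  #|[set d in D | d ^+ m == 1]| = gcdn #|D| m.
Proof.
move=> D0 D1 DM; pose H := [set u : {unit F} | val u \in D].
have H_group : group_set H.
  by apply/group_setP; split=> [|u v]; rewrite !inE ?val_unit1 // val_unitM; apply: DM.
have card_val_H (P : pred F) : #|[set u in H | P (val u)]| = #|[set d in D | P d]|.
  rewrite -(card_imset _ val_inj); apply: eq_card => d.
  rewrite [in RHS]inE; apply/imsetP/andP => [[u] | [dD Pd]].
    by rewrite !inE => /andP[uD Pu] ->.
  have d_unit : d \is a GRing.unit by rewrite unitfE; apply: contraNneq D0 => <-.
  by exists (Sub d d_unit); rewrite ?inE ?SubK ?dD.
have card_H : #|H| = #|D|.
  have /eq_card <- : [set u in H | true] =i H by move=> u; rewrite inE andbT.
  by rewrite (card_val_H xpredT); apply: eq_card => d; rewrite inE andbT.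
rewrite -(card_val_H (fun d => d ^+ m == 1)) -card_H.
rewrite -(card_unity_roots_unit_group (Group H_group)) /=.
by apply: eq_card => u; rewrite !inE -val_unitX -val_unit1 (inj_eq val_inj).
Qed.

Section PowersA.
Variables (L : finFieldType) (q : nat).

Definition kappa (t : triple L) : L := t.2 + t.1.1 * t.1.2 ^+ q * (t.1.2 / (1 - t.1.1)).

Lemma powA_a (t : triple L) j : (powA q t j).1.1 = t.1.1 ^+ j.
Proof. by elim: j => [|j IH] //; rewrite /powA iterS -/(powA q t j) /= IH exprS. Qed.

Lemma powA_b (t : triple L) j : (powA q t j).1.2 = t.1.2 * \sum_(i < j) t.1.1 ^+ i.
Proof.
elim: j => [|j IH]; first by rewrite big_ord0 mulr0.
by rewrite /powA iterS -/(powA q t j) /= IH powA_a big_ord_recr /=; ring.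
Qed.

Hypothesis frobD : forall x y : L, (x + y) ^+ q = x ^+ q + y ^+ q.
Hypothesis q_gt0 : (0 < q)%N.

Lemma frobN (x : L) : (- x) ^+ q = - x ^+ q.
Proof. by apply/eqP; rewrite -addr_eq0 -frobD addNr expr0n gtn_eqF. Qed.

Lemma powA_closed_form (a beta c : L) j :
  powA q (a, beta * (1 - a), c) j =
  (a ^+ j, beta * (1 - a ^+ j),
   beta ^+ q.+1 * ((a ^+ j) ^+ q.+1 - a ^+ j) +
   (c + a * beta ^+ q * (1 - a ^+ q) * beta) * \sum_(i < j) (a ^+ q.+1) ^+ i).
Proof.
elim: j => [|j IH]; first by rewrite big_ord0 !expr0 expr1n subrr !mulr0 addr0.
rewrite /powA iterS -/(powA q _ j) IH /Defs.compA /= big_ord_recr /=.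
have -> : (a ^+ q.+1) ^+ j = a ^+ j * (a ^+ j) ^+ q by rewrite exprAC exprS.
by rewrite !exprS !exprMn frobD frobN expr1n; congr (_, _, _); ring.
Qed.

Lemma powA_unity (a b c : L) j : a != 1 -> a ^+ j = 1 ->
  powA q (a, b, c) j = (1, 0, kappa (a, b, c) * \sum_(i < j) (a ^+ q.+1) ^+ i).
Proof.
move=> a_neq1 a_j; have a1_neq0 : 1 - a != 0 by rewrite subr_eq0 eq_sym.
have b_def : b = b / (1 - a) * (1 - a) by rewrite divfK.
set beta := b / (1 - a) in b_def *.
have -> : kappa (a, b, c) = c + a * beta ^+ q * (1 - a ^+ q) * beta.
  by rewrite /kappa /= {1}b_def exprMn frobD frobN expr1n !mulrA.
by rewrite {1}b_def powA_closed_form a_j expr1n subrr !mulr0 add0r.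
Qed.

Lemma has_orderA_kappa (a b c : L) s : (1 < s)%N -> has_order_mul a s ->
  (a ^+ q.+1 = 1 -> s%:R != 0 :> L) ->
  has_orderA q (a, b, c) s = (a ^+ q.+1 == 1) ==> (kappa (a, b, c) == 0).
Proof.
move=> s_gt1 [a_s a_lt] s_neq0; have a_neq1 : a != 1 by rewrite -[a]expr1 a_lt ?s_gt1.
rewrite /has_orderA; have -> : [forall k : 'I_s, (0 < k)%N ==> (powA q (a, b, c) k != idA L)].
  apply/forallP => k; apply/implyP => k_gt0.
  apply: contra (a_lt k _) => [/eqP powk|]; last by rewrite k_gt0 ltn_ord.
  by rewrite -(powA_a (a, b, c)) powk.
rewrite andbT powA_unity //.
rewrite sum_expr_unity_root; last by rewrite exprAC a_s expr1n.
rewrite /idA !xpair_eqE !eqxx /=.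
have [/s_neq0 s_ne0 | _] := eqVneq (a ^+ q.+1) 1; last by rewrite mulr0 eqxx.
by rewrite mulf_eq0 (negbTE s_ne0) orbF.
Qed.

Lemma has_orderA_pchar p (a b c : L) s : p \in [pchar L] -> (p %| q)%N ->
  (1 < s)%N -> has_order_mul a s ->
  has_orderA q (a, b, c) s = (s %| q.+1)%N ==> (kappa (a, b, c) == 0).
Proof.
move=> chp p_q s_gt1 a_ord; have a_exp := has_order_mul_dvdn (ltnW s_gt1) a_ord.
rewrite has_orderA_kappa -?a_exp // => /eqP; rewrite a_exp => s_q1.
exact: natr_dvdS_neq0 chp p_q s_q1.
Qed.

End PowersA.

Section GroupB.
Variables (L : finFieldType) (q : nat).

Definition abd (g : quad L) : L * L * L := (qa g, qb g, qd g).

Definition powB (g : quad L) j : quad L := iter j (compB q g) (idB L).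

Lemma abd_qc_inj (g h : quad L) : abd g = abd h -> qc g = qc h -> g = h.
Proof.
by case: g h => [[[a b] c] d] [[[a' b'] c'] d']; rewrite /abd /qa /qb /qc /qd /= => -[-> -> ->] ->.
Qed.

Lemma piB_powB g j : piB (powB g j) = powA q (piB g) j.
Proof.
elim: j => [|j IH] //; rewrite /powB /powA !iterS -/(powB g j) -/(powA q _ j) -IH.
by case: (powB g j) => [[[? ?] ?] ?].
Qed.

Lemma qb_powB g j : qb (powB g j) = qb g * \sum_(i < j) qa g ^+ i.
Proof. by have := congr1 (fun t => t.1.2) (piB_powB g j); rewrite powA_b. Qed.

Lemma qd_powB g j : qd (powB g j) = qd g ^+ j.
Proof. by elim: j => [|j IH] //; rewrite /powB iterS -/(powB g j) exprS -IH. Qed.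

Lemma qa_compB (g h : quad L) : qa (compB q g h) = qa g * qa h. Proof. by []. Qed.
Lemma qb_compB (g h : quad L) : qb (compB q g h) = qa h * qb g + qb h. Proof. by []. Qed.
Lemma qc_compB (g h : quad L) :
  qc (compB q g h) = qa h ^+ q.+1 * qc g + qa h * qb h ^+ q * qb g + qc h.
Proof. by []. Qed.
Lemma qd_compB (g h : quad L) : qd (compB q g h) = qd g * qd h. Proof. by []. Qed.

Lemma compB1l g : compB q (idB L) g = g.
Proof.
by case: g => [[[a b] c] d]; rewrite /compB /qa /qb /qc /qd /= !mulr0 !mul1r !add0r.
Qed.

Hypothesis frobD : forall x y : L, (x + y) ^+ q = x ^+ q + y ^+ q.
Hypothesis q_gt0 : (0 < q)%N.

Lemma compB1r g : compB q g (idB L) = g.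
Proof.
case: g => [[[a b] c] d].
by rewrite /compB /qa /qb /qc /qd /= expr0n gtn_eqF // expr1n mulr0 mul0r !mulr1 !mul1r !addr0.
Qed.

Lemma compBA : associative (@compB L q).
Proof.
move=> [[[a1 b1] c1] d1] [[[a2 b2] c2] d2] [[[a3 b3] c3] d3].
rewrite /compB /qa /qb /qc /qd /= frobD !exprMn !exprS.
by congr (_, _, _, _); ring.
Qed.

Section Subgroup.
Variables (n : nat) (G : {set quad L}).
Hypothesis sG : is_subgroupB q n G.

Lemma subgroupB_qd_exp g : g \in G -> qd g ^+ mB q n = qa g.
Proof. by case: sG => sub _ _ _ /sub; rewrite unfold_in => /and5P[_ _ _ _ /andP[_ /eqP]]. Qed.

Lemma subgroupB_qa1 g : g \in G -> qd g = 1 -> qa g = 1.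
Proof. by move=> gG g1; rewrite -subgroupB_qd_exp // g1 expr1n. Qed.

Lemma subgroupB_inv x : x \in G ->
  exists2 h, h \in G & compB q h x = idB L /\ compB q x h = idB L.
Proof.
case: sG => _ _ _ Ginv xG; have [h hG hx] := Ginv x xG; have [h' _ h'h] := Ginv h hG.
exists h => //; split => //; suff <- : h' = x by [].
by rewrite -[h']compB1r -hx compBA h'h compB1l.
Qed.

Lemma subgroupB_qa_neq0 g : g \in G -> qa g != 0.
Proof.
move=> /subgroupB_inv[h _ [/(congr1 (@qa L)) hg _]].
by apply/eqP => g0; move: hg; rewrite qa_compB g0 mulr0 => /eqP; rewrite eq_sym oner_eq0.
Qed.

Lemma subgroupB_qd_neq0 g : g \in G -> qd g != 0.
Proof.
move=> /subgroupB_inv[h _ [/(congr1 (@qd L)) hg _]].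
by apply/eqP => g0; move: hg; rewrite qd_compB g0 mulr0 => /eqP; rewrite eq_sym oner_eq0.
Qed.

Lemma powB_in g j : g \in G -> powB g j \in G.
Proof.
case: sG => _ G_id Gmul _ gG.
by elim: j => [|j IH] //; rewrite /powB iterS -/(powB g j) Gmul.
Qed.

Lemma card_rcompB (P : pred (quad L)) x : x \in G ->
  #|[set y in G | P (compB q y x)]| = #|[set y in G | P y]|.
Proof.
move=> xG; have [h hG [hx xh]] := subgroupB_inv xG; case: sG => _ _ Gmul _.
rewrite -(card_in_imset (f := compB q ^~ x)) => [|y y' _ _ /(congr1 (compB q ^~ h))]; last first.
  by rewrite -!compBA xh !compB1r.
apply: eq_card => z; rewrite [in RHS]inE; apply/imsetP/andP => [[y] | [zG Pz]].
  by rewrite inE => /andP[yG Py] ->; rewrite Gmul.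
by exists (compB q z h); rewrite ?inE -?compBA ?hx ?compB1r ?Gmul ?Pz.
Qed.

Local Notation m := (mB q n).

Definition ker_abd : {set quad L} := [set g in G | abd g == (1, 0, 1)].

Lemma card_abd_fibre x : x \in G ->
  #|[set y in G | abd y == abd x]| = #|ker_abd|.
Proof.
move=> xG; have xa := subgroupB_qa_neq0 xG; have xd := subgroupB_qd_neq0 xG.
rewrite -(card_rcompB (fun z => abd z == abd x) xG).
apply: eq_card => y; rewrite !inE; apply: andb_id2l => yG.
rewrite /abd qa_compB qb_compB qd_compB !xpair_eqE.
rewrite -{2}[qa x]mul1r -{2}[qd x]mul1r -{2}[qb x]add0r.
by rewrite !(inj_eq (mulIf _)) // (inj_eq (addIr _)) mulf_eq0 (negbTE xa).
Qed.

Lemma card_qa_fibre a : a \in G1 G ->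
  #|[set g in G | qa g == a]| = #|[set g in G | qa g == 1]|.
Proof.
case/imsetP => x xG ->; rewrite -(card_rcompB (fun z => qa z == qa x) xG).
apply: eq_card => y; rewrite !inE; apply: andb_id2l => yG.
by rewrite qa_compB -{2}[qa x]mul1r (inj_eq (mulIf (subgroupB_qa_neq0 xG))).
Qed.

Lemma card_qa1 : #|[set g in G | qa g == 1]| = (gcdn (g0 G) m * gw G)%N.
Proof.
case: (sG) => _ G_id Gmul _.
rewrite (card_uniform_fibres (f := @qd L) (c := gw G)) => [|x]; last first.
  rewrite inE => /andP[xG /eqP x1].
  have -> : [set y in [set g in G | qa g == 1] | qd y == qd x] =
            [set y in G | (qa y == 1) && (qd y == qd x)].
    by apply/setP => y; rewrite !inE andbA.
  rewrite -(card_rcompB _ xG); apply: eq_card => y; rewrite !inE; apply: andb_id2l => yG.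
  rewrite qa_compB qd_compB x1 mulr1 -{2}[qd x]mul1r (inj_eq (mulIf (subgroupB_qd_neq0 xG))).
  by apply/andP/idP => [[] // | /eqP y1]; rewrite subgroupB_qa1 ?y1.
congr (_ * _)%N; rewrite /g0 -card_unity_roots_subgroup.
- apply: eq_card => d; rewrite [in RHS]inE; apply/imsetP/andP => [[x] | [/imsetP[x xG ->] x1]].
    by rewrite inE => /andP[xG /eqP x1] ->; rewrite imset_f // subgroupB_qd_exp ?x1.
  by exists x; rewrite // inE xG -subgroupB_qd_exp.
- by apply/imsetP => -[x /subgroupB_qd_neq0 xd x0]; rewrite x0 eqxx in xd.
- by apply/imsetP; exists (idB L).
- by move=> _ _ /imsetP[x xG ->] /imsetP[y yG ->]; rewrite -qd_compB imset_f ?Gmul.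
Qed.

Variable p : nat.
Hypothesis chp : p \in [pchar L].
Hypothesis m_neq0 : m%:R != 0 :> L.

Let p_pred_gt0 : (0 < p.-1)%N.
Proof. by rewrite -subn1 subn_gt0 prime_gt1 ?(pcharf_prime chp). Qed.

Lemma G2_qb_ker_qd : G2 G = [set qb g | g in G & qd g == 1].
Proof.
apply/setP => b; rewrite inE; apply/existsP/imsetP => [[g /and3P[gG /eqP g_a1 /eqP <-]] | [g]].
  (* m ^ (p - 1) is a multiple of m and equals 1 in L, by Fermat. *)
  exists (powB g (m ^ p.-1)).
    rewrite inE powB_in //= qd_powB -(divnK (dvdn_exp p_pred_gt0 (dvdnn m))) mulnC exprM.
    by rewrite subgroupB_qd_exp // g_a1 expr1n.
  rewrite qb_powB g_a1 (eq_bigr (fun _ => 1)) => [|i _]; last by rewrite expr1n.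
  by rewrite sumr_const card_ord natrX natr_expr_pred_pchar // mulr1.
by rewrite inE => /andP[gG g1] ->; exists g; rewrite gG subgroupB_qa1 ?(eqP g1) ?eqxx.
Qed.

Lemma card_ker_qd : gw G = (#|G2 G| * #|ker_abd|)%N.
Proof.
rewrite /gw (card_uniform_fibres (f := abd) (c := #|ker_abd|)) => [|x]; last first.
  rewrite inE => /andP[xG /eqP x1]; rewrite -(card_abd_fibre xG).
  apply: eq_card => y; rewrite !inE -andbA; apply: andb_id2l => yG.
  by rewrite /abd !xpair_eqE x1; case: (qd y == 1); rewrite ?andbT ?andbF.
have inj_b : injective (fun b : L => (1, b, 1) : L * L * L) by move=> b b' [].
rewrite G2_qb_ker_qd -(card_imset _ inj_b) -imset_comp; congr (_ * _)%N.
apply: eq_card => t; apply/imsetP/imsetP => -[g]; rewrite inE => /andP[gG /eqP g1] ->.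
  by exists g; rewrite ?inE ?gG /abd /= ?g1 ?subgroupB_qa1 ?eqxx.
by exists g; rewrite ?inE ?gG /abd /= ?g1 ?subgroupB_qa1 ?eqxx.
Qed.

Lemma exists_kappa0_abd e N : e \in G -> qa e != 1 -> qa e ^+ q.+1 = 1 ->
  qd e ^+ N = 1 -> N%:R != 0 :> L ->
  exists2 g, g \in G & (abd g == abd e) && (kappa q (piB g) == 0).
Proof.
move=> eG a_neq1 a_q1 eN N_neq0; case: (sG) => _ _ Gmul _.
(* By Fermat, j is a multiple of N with j = -1 in L. *)
pose j := (p.-1 * N ^ p.-1)%N.
have e_j : qd e ^+ j = 1.
  have N_j : (N %| j)%N by rewrite dvdn_mull // dvdn_exp.
  by rewrite -(divnK N_j) mulnC exprM eN expr1n.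
have a_j : qa e ^+ j = 1 by rewrite -(subgroupB_qd_exp eG) exprAC e_j expr1n.
have j_R : j%:R = -1 :> L.
  by rewrite natrM natrX natr_expr_pred_pchar // natr_pred_pchar // mulr1.
have := piB_powB e j; rewrite {2}/piB powA_unity // sum_expr_unity_root ?a_q1 ?expr1n //.
rewrite eqxx j_R mulrN1 => -[z_a z_b z_c].
exists (compB q (powB e j) e); first by rewrite Gmul ?powB_in.
rewrite /abd /kappa /piB qa_compB qb_compB qd_compB qd_powB z_a z_b e_j.
rewrite !mul1r mulr0 add0r eqxx qc_compB z_c z_b a_q1 /kappa /=.
by apply/eqP; ring.
Qed.

Lemma card_qa_kappa0 a s : (p %| q)%N -> a != 1 -> a ^+ s = 1 -> (s %| q.+1)%N ->
  (#|[set g in G | (qa g == a) && (kappa q (piB g) == 0%R)]| * #|ker_abd|)%N =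
  #|[set g in G | qa g == a]|.
Proof.
move=> p_q a_neq1 a_s s_q1.
have a_q1 : a ^+ q.+1 = 1 by rewrite -(divnK s_q1) mulnC exprM a_s expr1n.
have ms_neq0 : (m * s)%:R != 0 :> L.
  by rewrite natrM mulf_neq0 // (natr_dvdS_neq0 chp p_q s_q1).
set T := [set g in G | _ && _]; set E := [set g in G | qa g == a].
have abd_T : abd @: T = abd @: E.
  apply/eqP; rewrite eqEsubset imsetS ?andTb; last first.
    by apply/subsetP => g; rewrite !inE => /andP[-> /andP[-> _]].
  apply/subsetP => t /imsetP[e]; rewrite inE => /andP[eG /eqP e_a] ->{t}.
  have e_ms : qd e ^+ (m * s) = 1 by rewrite exprM subgroupB_qd_exp // e_a a_s.
  have [||g gG /andP[/eqP g_e g_k]] := exists_kappa0_abd eG _ _ e_ms ms_neq0; rewrite ?e_a //.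
  rewrite -g_e imset_f // !inE gG g_k andbT.
  by have /= -> := congr1 (fun t => t.1.1) g_e; rewrite e_a.
have inj_T : {in T &, injective abd}.
  move=> g h; rewrite !inE => /and3P[_ _ /eqP g_k] /and3P[_ _ /eqP h_k] gh.
  apply: abd_qc_inj => //; move: g_k h_k gh; rewrite /abd /kappa /piB /=.
  by move=> /eqP; rewrite addr_eq0 => /eqP -> /eqP; rewrite addr_eq0 => /eqP -> [-> -> _].
rewrite -(card_in_imset inj_T) abd_T.
rewrite [RHS](card_uniform_fibres (f := abd) (c := #|ker_abd|)) // => x.
rewrite inE => /andP[xG /eqP x_a]; rewrite -(card_abd_fibre xG).
apply: eq_card => y; rewrite !inE -andbA; apply: andb_id2l => yG.
by rewrite /abd !xpair_eqE -x_a; case: (qa y == qa x).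
Qed.

End Subgroup.
End GroupB.

Theorem lemma4p3 (p k n : nat) (L : finFieldType) (G : {set quad L}) (a : L) (s : nat) :
  prime p -> (0 < k)%N -> odd n ->
  #|L| = ((p ^ k) ^ (2 * n))%N ->
  is_subgroupB (p ^ k) n G ->
  a \in G1 G -> (1 < s)%N -> has_order_mul a s ->
  #|[set g in G | (qa g == a) && has_orderA (p ^ k) (piB g) s]| =
  (gcdn (g0 G) (mB (p ^ k) n) *
   (if (s %| (p ^ k).+1)%N then #|G2 G| else gw G))%N.
Proof.
move=> p_pr k_gt0 n_odd cardL sG aG1 s_gt1 a_ord; set q := (p ^ k)%N in sG *.
have chp : p \in [pchar L] by apply: (card_finPcharP (n := k * (2 * n))); rewrite // cardL -expnM.
have p_q : (p %| q)%N by rewrite dvdn_exp.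
have q_gt0 : (0 < q)%N by rewrite expn_gt0 prime_gt0.
have frobD (x y : L) : (x + y) ^+ q = x ^+ q + y ^+ q := exprDn_pchar_pow k x y chp.
have m_neq0 : (mB q n)%:R != 0 :> L by rewrite -(dvdn_pcharf chp) prime_ndvd_mB.
have a_exp := has_order_mul_dvdn (ltnW s_gt1) a_ord.
have orderA g : qa g = a ->
    has_orderA q (piB g) s = (s %| q.+1)%N ==> (kappa q (piB g) == 0).
  by move=> g_a; rewrite /piB g_a (has_orderA_pchar frobD q_gt0 _ _ chp).
case: ifP => s_q1; last first.
  rewrite -(card_qa1 frobD q_gt0 sG) -(card_qa_fibre frobD q_gt0 sG aG1).
  by apply: eq_card => g; rewrite !inE; case: eqP => // /orderA ->; rewrite s_q1 andbT.
have -> : [set g in G | (qa g == a) && has_orderA q (piB g) s] =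
          [set g in G | (qa g == a) && (kappa q (piB g) == 0)].
  by apply/setP => g; rewrite !inE; case: eqP => // /orderA ->; rewrite s_q1.
have ker_gt0 : (0 < #|ker_abd G|)%N.
  by case: sG => _ G_id _ _; apply/card_gt0P; exists (idB L); rewrite /ker_abd inE G_id; apply/eqP.
have a_neq1 : a != 1 by rewrite -[a]expr1 a_exp gtnNdvd.
apply/eqP; rewrite -(eqn_pmul2r ker_gt0) -mulnA -(card_ker_qd frobD q_gt0 sG chp m_neq0).
rewrite (card_qa_kappa0 frobD q_gt0 sG chp m_neq0 p_q a_neq1 (proj1 a_ord) s_q1).
by rewrite (card_qa_fibre frobD q_gt0 sG aG1) (card_qa1 frobD q_gt0 sG).
Qed.
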